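(* Let $\mathbb{K}\in\{\mathbb{R},\mathbb{C}\}$, let $X$ be a Hausdorff topological vector space over $\mathbb{K}$ whose topology is weak, and let $T:X\to X$ be a continuous linear operator. Then the following conditions are equivalent: (1) the dual operator $T'$ has no non-trivial finite dimensional invariant subspaces; (2) $T$ is transitive; (3) $T$ is mixing; (4) for any non-empty open subsets $U$ and $V$ of $X$, there is $k\in\mathbb{N}$ such that $p(T)(U)\cap V\neq\varnothing$ for every polynomial $p$ with coefficients in $\mathbb{K}$ of degree $\geq k$.
   Context: The topology $\tau$ of a topological vector space $X$ is called weak if there is a linear space $Y$ of linear functionals on $X$ separating the points of $X$ such that $\tau$ is exactly the weakest topology making every $f\in Y$ continuous. $X'$ denotes the space of continuous linear functionals on $X$, and the dual operator $T':X'\to X'$ is $(T'f)(x)=f(Tx)$. A non-trivial subspace means a subspace different from $\{0\}$; a subspace $L$ is invariant for $T'$ if $T'(L)\subseteq L$. $T$ is transitive if for any non-empty open $U,V\subseteq X$ there is $n\in\mathbb{N}$ with $T^n(U)\cap V\neq\varnothing$. $T$ is mixing if for any non-empty open $U,V\subseteq X$ there is $n\in\mathbb{N}$ such that $T^m(U)\cap V\neq\varnothing$ for every $m\geq n$. *)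

From HB Require Import structures.
From mathcomp Require Import all_boot all_order all_algebra.
From mathcomp Require Import all_classical all_reals all_analysis.
From mathcomp Require Import complex.
Set Implicit Arguments. Unset Strict Implicit. Unset Printing Implicit Defensive.
Import Order.TTheory GRing.Theory Num.Theory.
Import numFieldNormedType.Exports.
Import ComplexField.
Local Open Scope classical_set_scope.
Local Open Scope ring_scope.

(* The scalar field K in {R, C}: [RorC R true] is the real field R,
   [RorC R false] is the complex field C = R[i] (complex numbers over R),
   both with their usual norm topology (given by numFieldNormedType). *)
Definition RorC (R : realType) (b : bool) : numFieldType :=
  if b then (R : numFieldType) else (R[i] : numFieldType).

Section Defs.
Variables (K : numFieldType) (X : topologicalLmodType K).

Definition lin_functional (f : X -> K) : Prop :=
  forall (a : K) (x y : X), f (a *: x + y) = a * f x + f y.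

Definition functional_subspace (Y : set (X -> K)) : Prop :=
  (forall f, Y f -> lin_functional f) /\
  Y (fun _ => 0) /\
  (forall (a : K) f g, Y f -> Y g -> Y (fun x => a * f x + g x)).

Definition separates_points (Y : set (X -> K)) : Prop :=
  forall x y : X, x <> y -> exists f, Y f /\ f x <> f y.

(* The topology of X is exactly the weakest topology making every f in Y
   continuous, i.e. the topology generated by the subbasis
   { f^-1(W) | f in Y, W open in K }: a set is open iff each of its points
   lies in a finite intersection of subbasic sets contained in it. *)
Definition topology_is_weak_for (Y : set (X -> K)) : Prop :=
  forall U : set X, open U <->
    (forall x, U x -> exists (n : nat) (fs : 'I_n -> (X -> K)) (Ws : 'I_n -> set K),
       (forall i, Y (fs i)) /\ (forall i, open (Ws i)) /\
       (forall i, Ws i (fs i x)) /\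
       [set y | forall i, Ws i (fs i y)] `<=` U).

Definition weak_topology_space : Prop :=
  exists Y : set (X -> K),
    functional_subspace Y /\ separates_points Y /\ topology_is_weak_for Y.

Definition in_dual (f : X -> K) : Prop := lin_functional f /\ continuous f.

Definition nontriv_findim_dual_invariant (T : X -> X) (L : set (X -> K)) : Prop :=
  (forall f, L f -> in_dual f) /\
  L (fun _ => 0) /\
  (forall (a : K) f g, L f -> L g -> L (fun x => a * f x + g x)) /\
  (exists (n : nat) (fs : 'I_n -> (X -> K)),
     (forall i, L (fs i)) /\
     (forall f, L f -> exists c : 'I_n -> K, f = fun x => \sum_(i < n) c i * fs i x)) /\
  (exists f, L f /\ f <> (fun _ => 0)) /\
  (forall f, L f -> L (f \o T)).

Definition poly_op (p : {poly K}) (T : X -> X) : X -> X :=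
  fun x => \sum_(i < size p) p`_i *: iter i T x.

Definition transitive_op (T : X -> X) : Prop :=
  forall U V : set X, open U -> open V -> U !=set0 -> V !=set0 ->
    exists n : nat, (0 < n)%N /\ (iter n T @` U) `&` V !=set0.

Definition mixing_op (T : X -> X) : Prop :=
  forall U V : set X, open U -> open V -> U !=set0 -> V !=set0 ->
    exists n : nat, forall m : nat, (n <= m)%N -> (iter m T @` U) `&` V !=set0.

(* condition (4): deg p >= k, i.e. size p > k (this excludes p = 0) *)
Definition poly_mixing_op (T : X -> X) : Prop :=
  forall U V : set X, open U -> open V -> U !=set0 -> V !=set0 ->
    exists k : nat, forall p : {poly K}, (k < size p)%N ->
      (poly_op p T @` U) `&` V !=set0.

End Defs.

From HB Require Import structures.
From mathcomp Require Import all_boot all_order all_algebra.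
From mathcomp Require Import all_classical all_reals all_analysis.
From mathcomp Require Import complex ring.
Import ComplexField.
Import Order.TTheory GRing.Theory Num.Theory.
Import numFieldNormedType.Exports.
Local Open Scope classical_set_scope.
Local Open Scope ring_scope.
Set Implicit Arguments. Unset Strict Implicit. Unset Printing Implicit Defensive.

(* (1) says that [T'] makes the dual [X'] a torsion-free [K[x]]-module: if
   [q(T') h = 0] with [q <> 0], the [h \o T^i] span a finite-dimensional invariant
   subspace.  In a weak topology, basic open sets are cut out by finitely many
   functionals, so (4) amounts to solving [f_i x = f_i x0], [(p(T') g_j) x = g_j y0];
   such a finite linear system is solvable unless it violates a linear relation
   between the [f_i] and the [p(T') g_j].  Writing all these functionals, up to a
   common factor [c(T') <> 0], in a free [K[T']]-family and comparing degrees shows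
   that for [deg p] large every such relation only involves the [f_i].
   (4) => (3) => (2) are immediate with [p = x^m].  For (2) => (1), a
   finite-dimensional invariant subspace gives [h <> 0] and [q <> 0] with
   [q(T') h = 0]; composing with an embedding [K -> C] and factoring [q] over [C]
   gives an eigenfunctional [g \o T = lam g], and [|g \o T^n| = |lam|^n |g|]
   forbids orbits in one direction between [{|g| < e}] and [{|g - g x1| < e}],
   where [|g x1| = 2 e]. *)

Section DualPolyAction.
Variables (F : comNzRingType) (X : Type) (T : X -> X).
Implicit Types (p q : {poly F}) (h : X -> F) (x : X).

(* [dact q h] is [q(T') h], i.e. [h \o q(T)] when [h] is linear. *)
Definition dact q h : X -> F := fun x => \sum_(i < size q) q`_i * h (iter i T x).

Lemma dact_widen n q h x : (size q <= n)%N ->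
  dact q h x = \sum_(i < n) q`_i * h (iter i T x).
Proof.
move=> qn; rewrite /dact (big_ord_widen n (fun i => q`_i * h (iter i T x)) qn).
rewrite big_mkcond /=; apply: eq_bigr => i _; case: ifP => // /negbT.
by rewrite -leqNgt => qi; rewrite nth_default // mul0r.
Qed.

Lemma dact_eq q h1 h2 x : h1 =1 h2 -> dact q h1 x = dact q h2 x.
Proof. by move=> h12; apply: eq_bigr => i _; rewrite h12. Qed.

Lemma dactD p q h x : dact (p + q) h x = dact p h x + dact q h x.
Proof.
set n := maxn (size p) (size q).
rewrite (@dact_widen n) ?size_polyD // (@dact_widen n p) ?leq_maxl //.
rewrite (@dact_widen n q) ?leq_maxr // -big_split /=.
by apply: eq_bigr => i _; rewrite coefD mulrDl.
Qed.

Lemma dactZ c q h x : dact (c *: q) h x = c * dact q h x.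
Proof.
rewrite (@dact_widen (size q)) ?size_scale_leq // mulr_sumr.
by apply: eq_bigr => i _; rewrite coefZ mulrA.
Qed.

Lemma dact0 h x : dact 0 h x = 0.
Proof. by rewrite /dact size_poly0 big_ord0. Qed.

Lemma dactC c h x : dact c%:P h x = c * h x.
Proof. by rewrite (@dact_widen 1) ?size_polyC ?leq_b1 // big_ord1 coefC. Qed.

Lemma dact1 h x : dact 1 h x = h x.
Proof. by rewrite dactC mul1r. Qed.

Lemma dact_compT q h x : dact q h (T x) = dact q (h \o T) x.
Proof. by apply: eq_bigr => i _; rewrite /= -iterSr. Qed.

Lemma dactXM q h x : dact ('X * q) h x = dact q (h \o T) x.
Proof.
rewrite (@dact_widen (size q).+1); last first.
  by have [->|q0] := eqVneq q 0; rewrite ?mulr0 ?size_poly0 // mulrC size_mulX.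
rewrite big_ord_recl coefXM eqxx mul0r add0r (@dact_widen (size q)) //.
by apply: eq_bigr => i _; rewrite coefXM.
Qed.

Lemma dactX h x : dact 'X h x = h (T x).
Proof. by rewrite -(mulr1 'X) dactXM dact1. Qed.

Lemma dactM p q h x : dact (p * q) h x = dact p (dact q h) x.
Proof.
elim/poly_ind: p q h x => [|p c IHp] q h x; first by rewrite mul0r !dact0.
rewrite mulrDl -mulrA mul_polyC dactD dactZ IHp dactD dactC [p * 'X]mulrC.
by congr (_ + _); rewrite dactXM; apply: dact_eq => y; rewrite dactXM /= dact_compT.
Qed.

Lemma dactXn n h x : dact 'X^n h x = h (iter n T x).
Proof.
elim: n h x => [|n IHn] h x; first by rewrite expr0 dact1.
by rewrite exprS dactM dactX IHn -iterSr.
Qed.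

Lemma dactN q h x : dact (- q) h x = - dact q h x.
Proof. by rewrite -scaleN1r dactZ mulN1r. Qed.

Lemma dact_suml n (P : 'I_n -> {poly F}) h x :
  dact (\sum_(i < n) P i) h x = \sum_(i < n) dact (P i) h x.
Proof.
elim/big_rec2: _ => [|i p y _ <-]; [exact: dact0 | exact: dactD].
Qed.

Lemma dact_sumr q n (G : 'I_n -> X -> F) x :
  dact q (fun y => \sum_(i < n) G i y) x = \sum_(i < n) dact q (G i) x.
Proof.
rewrite /dact; under eq_bigr do rewrite mulr_sumr.
by rewrite exchange_big.
Qed.

Lemma dactZr q a h x : dact q (fun y => a * h y) x = a * dact q h x.
Proof. by rewrite /dact mulr_sumr; apply: eq_bigr => i _; rewrite mulrCA. Qed.

Lemma dactDr q h1 h2 x :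
  dact q (fun y => h1 y + h2 y) x = dact q h1 x + dact q h2 x.
Proof. by rewrite /dact -big_split; apply: eq_bigr => i _; rewrite mulrDr. Qed.

Lemma dactNr q h x : dact q (fun y => - h y) x = - dact q h x.
Proof. by rewrite /dact -sumrN; apply: eq_bigr => i _; rewrite mulrN. Qed.

Lemma dactr0 q x : dact q (fun=> 0) x = 0.
Proof. by rewrite /dact big1 // => i _; rewrite mulr0. Qed.

End DualPolyAction.

Lemma sum_ord_recl_nat (V : zmodType) (G : nat -> V) n :
  \sum_(l < n.+1) G l = G 0%N + \sum_(l < n) G l.+1.
Proof. by rewrite big_ord_recl; under eq_bigr do rewrite lift0. Qed.

Lemma continuous_lincomb (S : topologicalType) (K : numFieldType) n
    (a : nat -> K) (G : nat -> S -> K) :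
  (forall i, continuous (G i)) -> continuous (fun x => \sum_(i < n) a i * G i x).
Proof.
move=> cG; elim: n => [|n IHn].
  by under eq_fun do rewrite big_ord0; exact: cst_continuous.
under eq_fun do rewrite big_ord_recr /=.
by move=> x; apply: cvgD; [exact: IHn | apply: cvgM; [exact: cvg_cst | exact: cG]].
Qed.

Section Dual.
Variables (K : numFieldType) (X : topologicalLmodType K).
Implicit Types (f g h : X -> K) (x y : X).

Lemma lin_functional0 f : lin_functional f -> f 0 = 0.
Proof.
move=> lf; have := lf 1 0 0; rewrite scaler0 addr0 mul1r => f00.
by apply: (addrI (f 0)); rewrite addr0 -f00.
Qed.

Lemma lin_functionalD f x y : lin_functional f -> f (x + y) = f x + f y.
Proof. by move=> lf; have := lf 1 x y; rewrite scale1r mul1r. Qed.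

Lemma lin_functionalZ f a x : lin_functional f -> f (a *: x) = a * f x.
Proof. by move=> lf; rewrite -[_ *: _]addr0 lf lin_functional0 // addr0. Qed.

Lemma lin_functional_sum f n (a : nat -> K) (v : nat -> X) : lin_functional f ->
  f (\sum_(i < n) a i *: v i) = \sum_(i < n) a i * f (v i).
Proof.
move=> lf; elim: n => [|n IHn]; first by rewrite !big_ord0 lin_functional0.
by rewrite !big_ord_recr /= lin_functionalD // IHn lin_functionalZ.
Qed.

Lemma in_dual_lincomb n (a : nat -> K) (G : nat -> X -> K) :
  (forall i, in_dual (G i)) -> in_dual (fun x => \sum_(i < n) a i * G i x).
Proof.
move=> dG; split; last by apply: continuous_lincomb => i; case: (dG i).
move=> b x y; rewrite mulr_sumr -big_split; apply: eq_bigr => i _.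
by case: (dG i) => lG _; rewrite lG mulrDr mulrCA.
Qed.

Lemma lin_functional_poly_op f (T : X -> X) p x :
  lin_functional f -> f (poly_op p T x) = dact T p f x.
Proof. by move=> lf; rewrite lin_functional_sum. Qed.

Variable T : X -> X.
Hypotheses (linT : linear T) (contT : continuous T).

Lemma iter_linear n a x y : iter n T (a *: x + y) = a *: iter n T x + iter n T y.
Proof. by elim: n => [|n IHn] //=; rewrite IHn linT. Qed.

Lemma iter_continuous n : continuous (iter n T).
Proof.
elim: n => [|n IHn] x /=; first exact: cvg_id.
by apply: continuous_comp; [exact: IHn | exact: contT].
Qed.

Lemma in_dual_dact q f : in_dual f -> in_dual (dact T q f).
Proof.
move=> [lf cf]; have dfT i : in_dual (fun x => f (iter i T x)).
  split=> [a x y|x]; first by rewrite iter_linear lf.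
  by apply: continuous_comp; [exact: iter_continuous | exact: cf].
exact: (in_dual_lincomb (size q) (fun i => q`_i) dfT).
Qed.

Definition dual_torsion_free := forall h (q : {poly K}), in_dual h -> q != 0 ->
  (forall x, dact T q h x = 0) -> forall x, h x = 0.

Lemma no_invariant_torsion_free :
  ~ (exists L, nontriv_findim_dual_invariant T L) -> dual_torsion_free.
Proof.
move=> noL h q dh q0 qh x; apply: contrapT => hx; apply: noL.
exists (fun k => exists r, k = dact T r h).
split; first by move=> _ [r ->]; exact: in_dual_dact.
split; first by exists 0; apply: funext => y; rewrite dact0.
split.
  move=> a _ _ [r1 ->] [r2 ->]; exists (a *: r1 + r2).
  by apply: funext => y; rewrite dactD dactZ.
split.
  exists (size q).-1, (fun i y => h (iter i T y)); split.
    by move=> i; exists 'X^i; apply: funext => y; rewrite dactXn.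
  move=> _ [r ->]; exists (fun i => (r %% q)`_i); apply: funext => y.
  rewrite {1}(divp_eq r q) dactD dactM (dact_eq _ _ _ qh) dactr0 add0r.
  apply: dact_widen; rewrite -ltnS prednK ?ltn_modp // lt0n size_poly_eq0 //.
split.
  exists h; split; first by exists 1; apply: funext => y; rewrite dact1.
  by move=> h0; apply: hx; rewrite h0.
by move=> _ [r ->]; exists ('X * r); apply: funext => y; rewrite /= dact_compT dactXM.
Qed.

End Dual.

Section LinearSystem.
Variables (K : numFieldType) (X : topologicalLmodType K).

Lemma lin_system_solvable N (phi : nat -> X -> K) (c : nat -> K) :
  (forall l, lin_functional (phi l)) ->
  (forall w : nat -> K, (forall x, \sum_(l < N) w l * phi l x = 0) ->
      \sum_(l < N) w l * c l = 0) ->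
  exists x, forall l, (l < N)%N -> phi l x = c l.
Proof.
elim: N phi c => [|N IHN] phi c lphi compat; first by exists 0.
have [e phi0e] : exists e, phi 0%N e = 1 \/ forall x, phi 0%N x = 0.
  case: (pselect (exists e, phi 0%N e != 0)) => [[e e0]|phi0].
    by exists ((phi 0%N e)^-1 *: e); left; rewrite lin_functionalZ // mulVf.
  by exists 0; right => x; apply: contrapT => x0; apply: phi0; exists x; apply/eqP.
(* Gaussian elimination of the first unknown along [e]. *)
pose psi l x := phi l.+1 x - phi 0%N x * phi l.+1 e.
pose c' l := c l.+1 - c 0%N * phi l.+1 e.
have [x' psix'] : exists x, forall l, (l < N)%N -> psi l x = c' l.
  apply: IHN => [l a x y|w wpsi]; first by rewrite /psi !lphi; ring.
  pose W l := if l is k.+1 then w k else - \sum_(k < N) w k * phi k.+1 e.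
  have /compat : forall x, \sum_(l < N.+1) W l * phi l x = 0.
    move=> x; rewrite (sum_ord_recl_nat (fun l => W l * phi l x)) -[RHS](wpsi x) /=.
    rewrite mulNr mulr_suml -sumrN -big_split /=.
    by apply: eq_bigr => i _; rewrite /psi; ring.
  rewrite (sum_ord_recl_nat (fun l => W l * c l)) /= mulNr mulr_suml -sumrN.
  rewrite -big_split /= => rel.
  by rewrite -[RHS]rel; apply: eq_bigr => i _; rewrite /c'; ring.
exists (x' + (c 0%N - phi 0%N x') *: e) => -[_|l lN].
  rewrite lin_functionalD // lin_functionalZ //; case: phi0e => [-> | phi0]; first by ring.
  pose W l : K := if l is 0 then 1 else 0.
  have /compat : forall x, \sum_(l < N.+1) W l * phi l x = 0.
    move=> x; rewrite (sum_ord_recl_nat (fun l => W l * phi l x)) big1 /=.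
      by rewrite phi0 mulr0 add0r.
    by move=> i _; rewrite mul0r.
  rewrite (sum_ord_recl_nat (fun l => W l * c l)) big1 /= => [|i _].
    by rewrite !phi0 mul1r addr0 => ->; rewrite !mulr0 addr0.
  by rewrite mul0r.
rewrite lin_functionalD // lin_functionalZ //.
have -> : phi l.+1 x' = c' l + phi 0%N x' * phi l.+1 e by rewrite -psix' // subrK.
by rewrite /c'; ring.
Qed.

End LinearSystem.

Section FreeCover.
Variables (K : numFieldType) (X : Type) (T : X -> X).

Definition dact_free r (b : nat -> X -> K) := forall q : nat -> {poly K},
  (forall x, \sum_(i < r) dact T (q i) (b i) x = 0) -> forall i, (i < r)%N -> q i = 0.

(* Adjoin [e N] to the free family if it stays free; otherwise a relation expresses
   a nonzero multiple of [e N] through the family. *)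
Lemma dact_free_cover N (e : nat -> X -> K) :
  exists r b (c : {poly K}) (a : nat -> nat -> {poly K}), [/\ c != 0, dact_free r b &
    forall j, (j < N)%N -> forall x, dact T c (e j) x = \sum_(i < r) dact T (a j i) (b i) x].
Proof.
elim: N => [|N [r [b [c [a [c0 bfree ecover]]]]]].
  by exists 0%N, (fun _ _ => 0), 1, (fun _ _ => 0); split; rewrite ?oner_neq0.
pose b' (i : nat) := if i == r then e N else b i.
have sum_b' (q : nat -> {poly K}) x : \sum_(i < r.+1) dact T (q i) (b' i) x =
    \sum_(i < r) dact T (q i) (b i) x + dact T (q r) (e N) x.
  rewrite big_ord_recr /= /b' eqxx; congr (_ + _).
  by apply: eq_bigr => i _; rewrite ltn_eqF.
have [b'free|b'dep] := pselect (dact_free r.+1 b').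
  pose a' j i := if j == N then (if i == r then c else 0)
                 else if i == r then 0 else a j i.
  exists r.+1, b', c, a'; split => // j; rewrite ltnS leq_eqVlt => /predU1P[-> | jN] x.
    rewrite (sum_b' (a' N)) /a' !eqxx big1 ?add0r // => i _.
    by rewrite ltn_eqF // dact0.
  rewrite (sum_b' (a' j)) /a' (ltn_eqF jN) eqxx dact0 addr0 ecover //.
  by apply: eq_bigr => i _; rewrite ltn_eqF.
have [q qrel [i ir qi0]] : exists2 q : nat -> {poly K},
    (forall x, \sum_(i < r.+1) dact T (q i) (b' i) x = 0) &
    exists2 i, (i < r.+1)%N & q i != 0.
  apply: contrapT => nodep; apply: b'dep => q qrel i ir; apply/eqP/negPn/negP => qi0.
  by apply: nodep; exists q => //; exists i.
have qr0 : q r != 0.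
  apply: contra qi0 => /eqP qr0.
  have /bfree bq : forall x, \sum_(i < r) dact T (q i) (b i) x = 0.
    by move=> x; rewrite -[RHS](qrel x) (sum_b' q) qr0 dact0 addr0.
  by move: ir; rewrite ltnS leq_eqVlt => /predU1P[-> | /bq ->]; rewrite ?qr0.
have eN x : dact T (q r) (e N) x = - \sum_(i < r) dact T (q i) (b i) x.
  by apply/eqP; rewrite -addr_eq0 addrC -(sum_b' q) qrel.
exists r, b, (c * q r), (fun j i => if j == N then - (c * q i) else q r * a j i).
split => [||j]; [exact: mulf_neq0 | by [] |].
rewrite ltnS leq_eqVlt => /predU1P[-> | jN] x.
  rewrite eqxx dactM (dact_eq _ _ _ eN) dactNr dact_sumr -sumrN.
  by apply: eq_bigr => k _; rewrite dactN dactM.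
rewrite (ltn_eqF jN) mulrC dactM (dact_eq _ _ _ (ecover j jN)) dact_sumr.
by apply: eq_bigr => k _; rewrite dactM.
Qed.

Lemma dact_lincomb_cover n r (c : {poly K}) (a : nat -> nat -> {poly K})
    (e b : nat -> X -> K) (v : nat -> K) :
  (forall j, (j < n)%N -> forall x, dact T c (e j) x = \sum_(i < r) dact T (a j i) (b i) x) ->
  forall x, dact T c (fun y => \sum_(j < n) v j * e j y) x =
            \sum_(i < r) dact T (\sum_(j < n) v j *: a j i) (b i) x.
Proof.
move=> ecover x; rewrite dact_sumr.
transitivity (\sum_(j < n) \sum_(i < r) v j * dact T (a j i) (b i) x).
  by apply: eq_bigr => j _; rewrite dactZr ecover // mulr_sumr.
rewrite exchange_big; apply: eq_bigr => i _ /=.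
by rewrite dact_suml; apply: eq_bigr => j _; rewrite dactZ.
Qed.

End FreeCover.

Lemma lt_size_addr_mul_eq0 (K : idomainType) (p a b : {poly K}) :
  (size b < size p)%N -> b + p * a = 0 -> a = 0.
Proof.
move=> bp /eqP; rewrite addr_eq0 => /eqP pab.
have p0 : p != 0 by rewrite -size_poly_gt0 (leq_ltn_trans _ bp).
apply/eqP; apply: contraTT bp => a0.
rewrite -leqNgt pab size_polyN size_mul //.
by move: a0; rewrite -size_poly_gt0; case: (size a) => // n _; rewrite addnS leq_addr.
Qed.

Definition catf (A : Type) n (F G : nat -> A) l := if (l < n)%N then F l else G (l - n)%N.

Lemma catf_lt (A : Type) n (F G : nat -> A) l : (l < n)%N -> catf n F G l = F l.
Proof. by rewrite /catf => ->. Qed.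

Lemma catf_addn (A : Type) n (F G : nat -> A) l : catf n F G (n + l) = G l.
Proof. by rewrite /catf ltnNge leq_addr addKn. Qed.

Section PolyMixing.
Variables (K : numFieldType) (X : topologicalLmodType K) (T : X -> X).

Lemma dact_relation_bound nU nV (fs gs : nat -> X -> K) :
  dual_torsion_free T -> (forall j, in_dual (gs j)) ->
  exists d, forall p : {poly K}, (d < size p)%N -> forall u v : nat -> K,
   (forall x, \sum_(i < nU) u i * fs i x +
              dact T p (fun y => \sum_(j < nV) v j * gs j y) x = 0) ->
   forall x, \sum_(j < nV) v j * gs j x = 0.
Proof.
move=> tf dgs.
have [r [b [c [a [c0 bfree ecover]]]]] := dact_free_cover T (nU + nV) (catf nU fs gs).
exists (\max_(j < nU) \max_(i < r) size (a j i)) => p dp u v rel.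
pose g y := \sum_(j < nV) v j * gs j y.
pose al i := \sum_(j < nV) v j *: a (nU + j)%N i.
pose be i := \sum_(j < nU) u j *: a j i.
have cg x : dact T c g x = \sum_(i < r) dact T (al i) (b i) x.
  apply: (dact_lincomb_cover (e := gs) (a := fun j => a (nU + j)%N)) => j jV y.
  by rewrite -(catf_addn nU fs) ecover // ltn_add2l.
have cf x : dact T c (fun y => \sum_(j < nU) u j * fs j y) x =
    \sum_(i < r) dact T (be i) (b i) x.
  apply: (dact_lincomb_cover (e := fs)) => j jU y.
  by rewrite -(catf_lt fs gs jU) ecover // ltn_addr.
have brel x : \sum_(i < r) dact T (be i + p * al i) (b i) x = 0.
  have := dact_eq T c x rel; rewrite dactr0 dactDr cf -dactM [c * p]mulrC dactM.
  rewrite (dact_eq _ _ _ cg) dact_sumr -big_split /= => cbrel.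
  by rewrite -[RHS]cbrel; apply: eq_bigr => i _; rewrite dactD dactM.
have al0 i : (i < r)%N -> al i = 0.
  move=> ir; have : be i + p * al i = 0 by apply: (bfree (fun k => be k + p * al k)).
  apply: lt_size_addr_mul_eq0.
  apply: leq_ltn_trans dp; rewrite /be; apply: leq_trans (size_sum _ _ _) _.
  apply/bigmax_leqP => j _; apply: leq_trans (size_scale_leq _ _) _.
  apply: leq_trans (@leq_bigmax _ (fun i : 'I_r => size (a j i)) (Ordinal ir)) _.
  exact: (@leq_bigmax _ (fun j : 'I_nU => \max_(i < r) size (a j i))).
have cg0 y : dact T c g y = 0 by rewrite cg big1 // => k _; rewrite al0 // dact0.
exact: (tf g c (in_dual_lincomb _ _ dgs) c0 cg0).
Qed.

Lemma weak_open_contains_fiber U x0 : weak_topology_space X -> open U -> U x0 ->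
  exists n (fs : nat -> X -> K), (forall i, in_dual (fs i)) /\
    forall x, (forall i, (i < n)%N -> fs i x = fs i x0) -> U x.
Proof.
move=> [Y [[lY [Y0 _]] [_ wk]]] oU Ux0.
have [n [fs [Ws [Yfs [oWs [Wsx0 WsU]]]]]] := (wk U).1 oU x0 Ux0.
have dY f : Y f -> in_dual f.
  move=> Yf; split; first exact: lY.
  apply/continuousP => W oW; apply/(wk _).2 => x Wfx.
  exists 1%N, (fun=> f), (fun=> W); split=> [_ //|]; split=> [_ //|].
  by split=> [_ //|y /(_ ord0)].
exists n, (fun l => if insub l is Some i then fs i else fun=> 0); split.
  by move=> l; apply: dY; case: insub.
move=> x fsx; apply: WsU => i; have := fsx i (ltn_ord i).
by rewrite valK => ->.
Qed.

Lemma torsion_free_poly_mixing : linear T -> continuous T ->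
  weak_topology_space X -> dual_torsion_free T -> poly_mixing_op T.
Proof.
move=> linT contT wX tf U V oU oV [x0 Ux0] [y0 Vy0].
have [nU [fs [dfs fsU]]] := weak_open_contains_fiber wX oU Ux0.
have [nV [gs [dgs gsV]]] := weak_open_contains_fiber wX oV Vy0.
have [d dP] := dact_relation_bound nU nV fs tf dgs.
exists d => p dp.
pose phi := catf nU fs (fun j => dact T p (gs j)).
pose c := catf nU (fun i => fs i x0) (fun j => gs j y0).
have [x phix] : exists x, forall l, (l < nU + nV)%N -> phi l x = c l.
  apply: lin_system_solvable => [l|w wphi].
    rewrite /phi /catf; case: ifP => _; first by case: (dfs l).
    by case: (in_dual_dact linT contT p (dgs (l - nU)%N)).
  have rel y : \sum_(i < nU) w i * fs i y +
      dact T p (fun z => \sum_(j < nV) w (nU + j)%N * gs j z) y = 0.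
    rewrite -[RHS](wphi y) big_split_ord dact_sumr /phi; congr (_ + _).
      by apply: eq_bigr => i _; rewrite (catf_lt _ _ (ltn_ord i)).
    by apply: eq_bigr => j _; rewrite dactZr catf_addn.
  have gs0 := dP p dp w (fun j => w (nU + j)%N) rel.
  have fs0 : \sum_(i < nU) w i * fs i x0 = 0.
    by rewrite -[RHS](rel x0) (dact_eq _ _ _ gs0) dactr0 addr0.
  transitivity (\sum_(i < nU) w i * fs i x0 + \sum_(j < nV) w (nU + j)%N * gs j y0).
    rewrite big_split_ord /c; congr (_ + _).
      by apply: eq_bigr => i _; rewrite (catf_lt _ _ (ltn_ord i)).
    by apply: eq_bigr => j _; rewrite catf_addn.
  by rewrite fs0 gs0 addr0.
exists (poly_op p T x); split; first exists x => //.
  apply: fsU => i iU; have := phix i (ltn_addr _ iU).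
  by rewrite /phi /c !catf_lt.
apply: gsV => j jV; have := phix (nU + j)%N; rewrite ltn_add2l /phi /c !catf_addn.
by case: (dgs j) => lg _ <- //; rewrite lin_functional_poly_op.
Qed.

End PolyMixing.

Lemma exists_nonzero_left_kernel (K : fieldType) n (M : 'M[K]_(n.+1, n)) :
  exists2 w : 'rV_n.+1, w != 0 & w *m M = 0.
Proof.
have : kermx M != 0.
  by rewrite kermx_eq0 /row_free neq_ltn (leq_ltn_trans (rank_leq_col M)) ?orbT.
by case/rowV0Pn => w; rewrite sub_kermx => /eqP wM w0; exists w.
Qed.

Section FindimInvariant.
Variables (K : numFieldType) (X : topologicalLmodType K) (T : X -> X).

(* The [n + 1] functionals [f \o T^k], [k <= n], of an [n]-dimensional invariant
   subspace are linearly dependent. *)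
Lemma findim_invariant_torsion L : nontriv_findim_dual_invariant T L ->
  exists f (q : {poly K}),
    [/\ in_dual f, exists x, f x != 0, q != 0 & forall x, dact T q f x = 0].
Proof.
move=> [Ldual [_ [_ [[n [fs [_ Lspan]]] [[f [Lf f0]] LT]]]]].
have LfT k : L (fun x => f (iter k T x)).
  elim: k => [|k IHk] //.
  suff -> : (fun x => f (iter k.+1 T x)) = (fun x => f (iter k T x)) \o T by exact: LT.
  by apply: funext => x /=; rewrite -iterSr.
have [C fTC] := choice (fun k : 'I_n.+1 => Lspan _ (LfT k)).
have [w w0 wC] := exists_nonzero_left_kernel (\matrix_(k, i) C k i).
pose q := \poly_(k < n.+1) w 0 (inord k).
have qw (k : 'I_n.+1) : q`_k = w 0 k by rewrite coef_poly ltn_ord inord_val.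
exists f, q; split; first exact: Ldual.
- apply: contrapT => nf; apply: f0; apply: funext => x.
  by apply/eqP; apply: contrapT => fx; apply: nf; exists x; apply/negP.
- apply: contra w0 => /eqP q0; apply/eqP/rowP => k.
  by rewrite mxE -qw q0 coef0.
move=> x; rewrite (dact_widen _ _ _ (size_poly _ _)).
transitivity (\sum_(k < n.+1) \sum_(i < n) w 0 k * C k i * fs i x).
  apply: eq_bigr => k _; rewrite qw (congr1 (fun h => h x) (fTC k)) mulr_sumr.
  by apply: eq_bigr => i _; rewrite mulrA.
rewrite exchange_big big1 // => i _; rewrite -mulr_suml.
transitivity ((w *m \matrix_(k, j) C k j) 0 i * fs i x); last by rewrite wC mxE mul0r.
by rewrite mxE; congr (_ * _); apply: eq_bigr => k _; rewrite mxE.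
Qed.

End FindimInvariant.

Section Eigenfunctional.
Variables (R : realType) (K : numFieldType) (iota : {rmorphism K -> R[i]}).
Variables (X : topologicalLmodType K) (T : X -> X).
Hypotheses (linT : linear T) (contT : continuous T).
Local Notation CC := (R[i] : numFieldType).

(* Functionals through the embedding [iota : K -> C], where eigenvalues exist. *)
Definition iota_functional (g : X -> R[i]) :=
  continuous (g : X -> CC) /\ forall a x y, g (a *: x + y) = iota a * g x + g y.

Lemma iota_functional0 g : iota_functional g -> g 0 = 0.
Proof.
move=> [_ lg]; have := lg 1 0 0; rewrite scaler0 addr0 rmorph1 mul1r => g00.
by apply: (addrI (g 0)); rewrite addr0 -g00.
Qed.

Lemma iota_functional_dact r g : iota_functional g -> iota_functional (dact T r g).
Proof.
move=> [cg lg]; split.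
  apply: (@continuous_lincomb X CC _ (fun i => r`_i) (fun i x => g (iter i T x))) => i x.
  by apply: continuous_comp; [exact: iter_continuous | exact: cg].
move=> a x y; rewrite /dact mulr_sumr -big_split /=; apply: eq_bigr => i _.
by rewrite iter_linear // lg mulrDr mulrCA.
Qed.

Lemma exists_eigenfunctional (p : {poly R[i]}) g : p != 0 -> iota_functional g ->
  (exists x, g x != 0) -> (forall x, dact T p g x = 0) ->
  exists lam g', [/\ iota_functional g', exists x, g' x != 0 &
                     forall x, g' (T x) = lam * g' x].
Proof.
have [n sp] := ubnP (size p); elim: n p g sp => // n IHn p g sp p0 ig gnz pg.
have [s1|s1] := eqVneq (size p) 1%N.
  have p00 : p`_0 != 0 by move: p0; rewrite -lead_coef_eq0 lead_coefE s1.
  exfalso; case: gnz => x /negP; apply; rewrite -(mulrI_eq0 _ (lregP p00)).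
  by rewrite -(dactC T) -(size1_polyC (eq_leq s1)) pg.
have [z /factor_theorem [q pq]] := closed_rootP p s1.
pose g1 := dact T ('X - z%:P) g.
have [[x g1x]|g1z] := pselect (exists x, g1 x != 0).
  have q0 : q != 0 by apply: contra p0 => /eqP q0; rewrite pq q0 mul0r.
  apply: (IHn q g1) => //; last by move=> y; rewrite -dactM -pq pg.
  - by move: sp; rewrite pq size_mul ?polyXsubC_eq0 // size_XsubC addn2 /= ltnS.
  - exact: iota_functional_dact.
  - by exists x.
exists z, g; split => // x; apply/eqP; rewrite -subr_eq0; apply/negP => gTx.
apply: g1z; exists x; rewrite /g1 dactD dactX -polyCN dactC mulNr.
by apply/negP.
Qed.

Lemma eigenfunctional_not_transitive (g : X -> R[i]) lam : iota_functional g ->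
  (exists x, g x != 0) -> (forall x, g (T x) = lam * g x) -> ~ transitive_op T.
Proof.
move=> ig [x1 gx1] gT tr.
have giter n x : g (iter n T x) = lam ^+ n * g x.
  by elim: n x => [|n IHn] x; rewrite ?expr0 ?mul1r // iterS gT IHn exprS mulrA.
have [e e0 x1e] : exists2 e, 0 < e & `|g x1| = e + e.
  by exists (`|g x1| / 2); [rewrite divr_gt0 // normr_gt0 | exact: splitr].
pose A := (g : X -> CC) @^-1` ball (0 : CC) e.
pose B := (g : X -> CC) @^-1` ball (g x1 : CC) e.
have oA : open A := (continuousP (g : X -> CC)).1 ig.1 _ (ball_open _ _).
have oB : open B := (continuousP (g : X -> CC)).1 ig.1 _ (ball_open _ _).
have A0 : A 0 by rewrite /A /= -ball_normE /= iota_functional0 // subr0 normr0.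
have Bx1 : B x1 by rewrite /B /= -ball_normE /= subrr normr0.
have AB y z : A y -> B z -> `|g y| < `|g z|.
  rewrite /A /B /= -!ball_normE /= sub0r normrN => gy gz; apply: (lt_trans gy).
  rewrite -(ltrD2l e) -x1e -{1}(subrK (g z) (g x1)).
  by apply: le_lt_trans (ler_normD _ _) _; rewrite ltrD2r.
have /orP[lam1|lam1] := real_leVge (normr_real lam) (real1 CC).
  have [n [_ [_ [[x Ax <-] BTx]]]] := tr A B oA oB (ex_intro _ 0 A0) (ex_intro _ x1 Bx1).
  have := lt_le_trans (AB _ _ Ax BTx); rewrite giter normrM normrX.
  by move/(_ _ (ler_piMl (normr_ge0 _) (exprn_ile1 n (normr_ge0 _) lam1))); rewrite ltxx.
have [n [_ [_ [[x Bx <-] ATx]]]] := tr B A oB oA (ex_intro _ x1 Bx1) (ex_intro _ 0 A0).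
have := le_lt_trans (ler_peMl (normr_ge0 (g x)) (exprn_ege1 n lam1)).
by rewrite -normrX -normrM -giter => /(_ _ (AB _ _ ATx Bx)); rewrite ltxx.
Qed.

Hypothesis contI : continuous (fun k : K => (iota k : CC)).

Lemma transitive_no_invariant :
  transitive_op T -> ~ exists L, nontriv_findim_dual_invariant T L.
Proof.
move=> tr [L /findim_invariant_torsion [f [q [[lf cf] [x fx] q0 qf]]]].
pose g y := iota (f y).
have ig : iota_functional g.
  split=> [y|a y z]; last by rewrite /g lf rmorphD rmorphM.
  apply: (@continuous_comp _ _ CC f (fun k : K => (iota k : CC))).
    exact: cf.
  exact: contI.
have gq y : dact T (map_poly iota q) g y = 0.
  transitivity (iota (dact T q f y)); last by rewrite qf rmorph0.
  rewrite /dact size_map_poly rmorph_sum; apply: eq_bigr => i _.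
  by rewrite coef_map rmorphM.
have [||lam [g' [ig' g'0 g'T]]] := exists_eigenfunctional _ ig _ gq.
- by rewrite map_poly_eq0.
- by exists x; rewrite /g fmorph_eq0.
exact: (eigenfunctional_not_transitive ig' g'0 g'T).
Qed.

End Eigenfunctional.

Section EasyImplications.
Variables (K : numFieldType) (X : topologicalLmodType K) (T : X -> X).

Lemma poly_op_Xn m : poly_op ('X^m : {poly K}) T =1 iter m T.
Proof.
move=> x; rewrite /poly_op size_polyXn big_ord_recr /= coefXn eqxx scale1r.
by rewrite big1 ?add0r // => i _; rewrite coefXn ltn_eqF // scale0r.
Qed.

Lemma poly_mixing_mixing : poly_mixing_op T -> mixing_op T.
Proof.
move=> pmix U V oU oV U0 V0; have [k kP] := pmix U V oU oV U0 V0.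
exists k => m km; have := kP 'X^m; rewrite size_polyXn ltnS => /(_ km).
by rewrite (funext (poly_op_Xn m)).
Qed.

Lemma mixing_transitive : mixing_op T -> transitive_op T.
Proof.
move=> mix U V oU oV U0 V0; have [n nP] := mix U V oU oV U0 V0.
by exists n.+1; split => //; apply: nP.
Qed.

End EasyImplications.

Lemma continuous_real_complex (R : realType) :
  continuous (fun k : R => (k%:C%C : (R[i] : numFieldType))).
Proof.
move=> x; apply/cvgrPdist_lt => e e0.
have eRe : e = (complex.Re e)%:C%C.
  by case: e e0 => a b; rewrite ltcE /= => /andP [/eqP -> _].
have Re0 : 0 < complex.Re e by move: e0; rewrite ltcE => /andP [].
have near_x := (cvgrPdist_lt (@id R) x).1 (@cvg_id _ (nbhs x)) _ Re0.
apply: (filterS _ (near_x _)) => t /= xt.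
by rewrite -rmorphB normc_def /= expr0n addr0 sqrtr_sqr eRe ltcR.
Qed.

Lemma exists_continuous_complex_embedding (R : realType) b :
  exists iota : {rmorphism RorC R b -> R[i]},
    continuous (fun k : RorC R b => (iota k : (R[i] : numFieldType))).
Proof.
case: b; first by exists (real_complex R); exact: continuous_real_complex.
by exists idfun => x; exact: cvg_id.
Qed.

Theorem theorem1p1 (R : realType) (b : bool)
  (X : topologicalLmodType (RorC R b)) (T : X -> X) :
  hausdorff_space X ->
  weak_topology_space X ->
  linear T -> continuous T ->
  [/\ (~ (exists L, nontriv_findim_dual_invariant T L)) <-> transitive_op T,
      transitive_op T <-> mixing_op T &
      mixing_op T <-> poly_mixing_op T].
Proof.
move=> _ wX linT contT.
have [iota contI] := exists_continuous_complex_embedding R b.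
have noinv_pmix : ~ (exists L, nontriv_findim_dual_invariant T L) -> poly_mixing_op T.
  by move=> /(no_invariant_torsion_free linT contT); exact: torsion_free_poly_mixing.
have trans_noinv := transitive_no_invariant linT contT contI.
have mix_trans := @mixing_transitive _ _ T.
have pmix_mix := @poly_mixing_mixing _ _ T.
split; split.
- by move/noinv_pmix/pmix_mix/mix_trans.
- exact: trans_noinv.
- by move/trans_noinv/noinv_pmix/pmix_mix.
- exact: mix_trans.
- by move/mix_trans/trans_noinv/noinv_pmix.
- exact: pmix_mix.
Qed.
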